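(* With notation as in the context, let $V$ be a finite-dimensional $K$-vector space with a $K$-linear automorphism $[1]:V\to V$ (i.e. a finite-dimensional $K$-linear representation of $\mathbb{Z}$). Consider the $E_A$-module $V\otimes_KE_A$ with the $\sigma$-semilinear automorphism $[1](v\otimes x)=[1](v)\otimes\sigma(x)$. Then $V\otimes_KE_A$ is trivial, i.e. it has an $E_A$-basis $b''_1,\dots,b''_n$ with $[1](b''_i)=b''_i$ for all $i$; equivalently, it is isomorphic, $E_A$-linearly and compatibly with the actions, to $E_A^n$ with the action of $\sigma$ componentwise.
   Context: $K$ is an algebraically closed field of characteristic $0$. $K[t^K]$ is the group algebra over $K$ of $(K,+)$, with $K$-basis $t^a$ ($a\in K$), $t^at^b=t^{a+b}$; $K[t,t^{-1}]$ is identified with the span of $t^n$, $n\in\mathbb{Z}$. Fix a set $\widetilde{K/\mathbb{Z}}\subset K$ of representatives of $K/\mathbb{Z}$ with $0\in\widetilde{K/\mathbb{Z}}$. $A$ is a commutative ring with unit containing $K[t,t^{-1}]$ as a subring, with a derivation $\partial:A\to A$ extending $t\frac{d}{dt}$ on $K[t,t^{-1}]$. $A[t^K]:=A\otimes_{K[t,t^{-1}]}K[t^K]$ and $E_A:=A[t^K][\ell]$ with $\ell$ an indeterminate. Fix a group isomorphism $\overline{\gamma}:K/\mathbb{Z}\to K^\times$ and set $\gamma:=\overline{\gamma}\circ\pi:K\to K^\times$ ($\pi$ the projection). $\sigma$ is the unique ring automorphism of $E_A$ with $\sigma(f)=f$ for $f\in A$, $\sigma(t^a)=\gamma(a)t^a$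 for $a\in K$, $\sigma(\ell)=\ell+1$. *)

From HB Require Import structures.
From mathcomp Require Import all_boot all_order all_algebra all_field.
Set Implicit Arguments.
Unset Strict Implicit.
Unset Printing Implicit Defensive.
Import GRing.Theory.
Local Open Scope ring_scope.

(* A (K,+)-character with values in a commutative ring S, compatible with a
   ring map f : A -> S on K[t,t^{-1}] (i.e. t^1 |-> f t).  Such characters
   are exactly the K-algebra maps K[t^K] -> S agreeing with f on
   K[t,t^{-1}] (the value t^a |-> chi a). *)
Definition compat_char (K : fieldType) (A : comAlgType K) (t : A)
  (S : comPzRingType) (f : A -> S) (chi : K -> S) : Prop :=
  [/\ chi 0 = 1, (forall a b, chi (a + b) = chi a * chi b) & chi 1 = f t].

(* (E, iota, tau, ell) is E_A = (A (x)_{K[t,t^{-1}]} K[t^K])[ell], with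
   iota : A -> E_A, tau a = 1 (x) t^a, ell the indeterminate, characterized by
   its defining universal property (pushout of commutative rings, then
   adjoining a free variable). *)
Definition is_EA (K : fieldType) (A : comAlgType K) (t : A)
  (E : comNzRingType) (iota : {rmorphism A -> E}) (tau : K -> E) (ell : E)
  : Prop :=
  compat_char t iota tau /\
  forall (S : comPzRingType) (f : {rmorphism A -> S}) (chi : K -> S) (s : S),
    compat_char t f chi ->
    exists h : {rmorphism E -> S},
      [/\ forall x, h (iota x) = f x,
          forall a, h (tau a) = chi a,
          h ell = s &
          forall h' : {rmorphism E -> S},
            (forall x, h' (iota x) = f x) ->
            (forall a, h' (tau a) = chi a) ->
            h' ell = s -> h' =1 h].

(* The sigma-semilinear action on V (x)_K E_A = E_A^n, for V = K^n (row
   vectors) with [1] v = v *m M:  [1](v (x) x) = [1](v) (x) sigma(x). *)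
Definition shift_act (K : fieldType) (A : comAlgType K) (E : comNzRingType)
  (iota : {rmorphism A -> E}) (sigma : E -> E) (n : nat) (M : 'M[K]_n)
  (w : 'rV[E]_n) : 'rV[E]_n :=
  map_mx sigma w *m map_mx (fun c : K => iota (c%:A)) M.

From HB Require Import structures.
From mathcomp Require Import all_boot all_order all_algebra all_field.
From mathcomp Require Import ring.
Set Implicit Arguments.
Unset Strict Implicit.
Unset Printing Implicit Defensive.
Import GRing.Theory.
Local Open Scope ring_scope.

(* Triangularize [1] over the algebraically closed field K and induct on n.
   An eigenvalue lam of [1] is absorbed by the invertible solution t^a of
   x = lam sigma(x), where gamma(a) = lam^-1.  The entries below the diagonal
   lead to equations x = lam sigma(x) + r inside K[t^K][ell]; on a term
   t^a P(ell) such an equation reads P(X) - lam gamma(a) P(X + 1) = Q(X) in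
   K[X], and this difference operator is onto (in characteristic 0 when
   lam gamma(a) = 1, since it then lowers degrees by exactly one). *)

Section ShiftDifference.
Variable K : fieldType.

Definition shift_diff (mu : K) (p : {poly K}) := p - mu *: (p \Po ('X + 1)).

Lemma coef_Xadd1_exp m j : (('X + 1) ^+ m : {poly K})`_j = 'C(m, j)%:R.
Proof.
elim: m j => [|m IH] j; first by rewrite expr0 coef1 bin0n; case: j.
rewrite exprSr mulrDr mulr1 coefD coefMX.
by case: j => [|j] /=; rewrite ?add0r !IH ?bin0 // binS natrD addrC.
Qed.

Lemma shift_diffD mu p q : shift_diff mu (p + q) = shift_diff mu p + shift_diff mu q.
Proof. by rewrite /shift_diff comp_polyD scalerDr opprD addrACA. Qed.

Lemma shift_diffZ mu c p : shift_diff mu (c *: p) = c *: shift_diff mu p.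
Proof. by rewrite /shift_diff comp_polyZ scalerBr !scalerA mulrC. Qed.

Lemma coef_shift_diffXn mu m j :
  (shift_diff mu 'X^m)`_j = (j == m)%:R - mu * 'C(m, j)%:R.
Proof. by rewrite /shift_diff comp_Xn_poly coefB coefZ coefXn coef_Xadd1_exp. Qed.

Hypothesis charK : [pchar K] =i pred0.

Lemma shift_diff_lead mu d : exists p, (size (shift_diff mu p - 'X^d)%R <= d)%N.
Proof.
have [->|mu1] := eqVneq mu 1.
  have d1_neq0 : (d.+1%:R : K) != 0 by move/pcharf0P: charK => ->.
  exists (- (d.+1%:R)^-1 *: 'X^(d.+1)); apply/leq_sizeP => j le_dj.
  rewrite shift_diffZ coefB coefZ coef_shift_diffXn coefXn mul1r.
  case: (ltngtP j d.+1) => [lt_jd|lt_dj|->].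
  - have -> : j = d by apply/eqP; rewrite eqn_leq le_dj -ltnS lt_jd.
    by rewrite binSn eqxx sub0r mulrN mulNr opprK mulVf ?subrr.
  - by rewrite bin_small // !gtn_eqF ?(ltn_trans (ltnSn d)) // subrr mulr0 subrr.
  - by rewrite binn gtn_eqF // subrr mulr0 subr0.
have mu1' : 1 - mu != 0 by rewrite subr_eq0 eq_sym.
exists ((1 - mu)^-1 *: 'X^d); apply/leq_sizeP => j le_dj.
rewrite shift_diffZ coefB coefZ coef_shift_diffXn coefXn.
case: (ltngtP j d) => [lt_jd|lt_dj|->].
- by move: le_dj; rewrite leqNgt lt_jd.
- by rewrite bin_small // mulr0 subrr mulr0 subrr.
- by rewrite binn mulr1 mulVf // subrr.
Qed.

Lemma shift_diff_surj mu q : exists p, shift_diff mu p = q.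
Proof.
elim: (size q) {-2}q (leqnn (size q)) => [|d IH] {}q size_q.
  move: size_q; rewrite leqn0 size_poly_eq0 => /eqP ->.
  by exists 0; rewrite /shift_diff comp_poly0 scaler0 subr0.
have [p0 size_p0] := shift_diff_lead mu d.
have [p Dp] : exists p, shift_diff mu p = q - q`_d *: shift_diff mu p0.
  apply: IH; apply/leq_sizeP => j le_dj.
  have Dp0_j : (shift_diff mu p0)`_j = (j == d)%:R.
    by apply/eqP; rewrite -subr_eq0 -coefXn -coefB (leq_sizeP _ _ size_p0).
  rewrite coefB coefZ Dp0_j.
  case: (ltngtP j d) => [lt_jd|lt_dj|->].
  - by move: le_dj; rewrite leqNgt lt_jd.
  - by rewrite mulr0 subr0 (leq_sizeP _ _ size_q).
  - by rewrite mulr1 subrr.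
by exists (q`_d *: p0 + p); rewrite shift_diffD shift_diffZ Dp addrC subrK.
Qed.

End ShiftDifference.

Section QuasiPolynomials.
Variables (K : fieldType) (E : comNzRingType) (kk : {rmorphism K -> E}).
Variables (sigma : {rmorphism E -> E}) (tau : K -> E) (ell : E) (gamma : K -> K).
Hypothesis sigma_kk : forall c, sigma (kk c) = kk c.
Hypothesis sigma_tau : forall a, sigma (tau a) = kk (gamma a) * tau a.
Hypothesis sigma_ell : sigma ell = ell + 1.

Definition ell_eval (p : {poly K}) : E := (map_poly kk p).[ell].

Lemma ell_evalB p q : ell_eval (p - q) = ell_eval p - ell_eval q.
Proof. by rewrite /ell_eval raddfB hornerD hornerN. Qed.

Lemma ell_evalZ c p : ell_eval (c *: p) = kk c * ell_eval p.
Proof. by rewrite /ell_eval map_polyZ hornerZ. Qed.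

Lemma sigma_tau_ell_eval a p :
  sigma (tau a * ell_eval p) = tau a * ell_eval (gamma a *: (p \Po ('X + 1))).
Proof.
have sigma_map : map_poly sigma (map_poly kk p) = map_poly kk p.
  by rewrite -map_poly_comp; apply: eq_map_poly => c /=; exact: sigma_kk.
rewrite rmorphM sigma_tau ell_evalZ /ell_eval -horner_map sigma_map sigma_ell.
rewrite map_comp_poly horner_comp map_polyXaddC rmorph1 !hornerE.
by congr (_ * _); exact: mulrC.
Qed.

(* The subring K[t^K][ell] of E_A: the K-span of the t^a P(ell). *)
Inductive quasipoly : E -> Prop :=
| quasipoly0 : quasipoly 0
| quasipolyD x y : quasipoly x -> quasipoly y -> quasipoly (x + y)
| quasipoly_tau a p : quasipoly (tau a * ell_eval p).

Lemma quasipolyMk c x : quasipoly x -> quasipoly (x * kk c).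
Proof.
elim=> [|y z _ IHy _ IHz|a p]; first by rewrite mul0r; exact: quasipoly0.
  by rewrite mulrDl; exact: quasipolyD.
by rewrite -mulrA [ell_eval p * _]mulrC -ell_evalZ; exact: quasipoly_tau.
Qed.

Lemma quasipoly_sigma x : quasipoly x -> quasipoly (sigma x).
Proof.
elim=> [|y z _ IHy _ IHz|a p]; first by rewrite rmorph0; exact: quasipoly0.
  by rewrite rmorphD; exact: quasipolyD.
by rewrite sigma_tau_ell_eval; exact: quasipoly_tau.
Qed.

Hypothesis charK : [pchar K] =i pred0.

Lemma quasipoly_solve lam r :
  quasipoly r -> exists2 x, quasipoly x & x = kk lam * sigma x + r.
Proof.
elim=> [|y z _ [x1 qx1 Dx1] _ [x2 qx2 Dx2]|a q].
- by exists 0; [exact: quasipoly0 | rewrite rmorph0 mulr0 addr0].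
- exists (x1 + x2); first exact: quasipolyD.
  by rewrite rmorphD mulrDr addrACA -Dx1 -Dx2.
- have [p <-] := shift_diff_surj charK (lam * gamma a) q.
  exists (tau a * ell_eval p); first exact: quasipoly_tau.
  rewrite sigma_tau_ell_eval /shift_diff ell_evalB !ell_evalZ rmorphM.
  ring.
Qed.

Hypothesis tau0 : tau 0 = 1.
Hypothesis tauD : forall a b, tau (a + b) = tau a * tau b.
Hypothesis gamma_surj : forall y, y != 0 -> exists a, gamma a = y.

(* [t^a] with [gamma a = lam^-1] is an invertible solution of [x = lam sigma(x)]. *)
Lemma quasipoly_unit_solution lam : lam != 0 ->
  exists u, [/\ quasipoly u, exists v, u * v = 1 & u = kk lam * sigma u].
Proof.
move=> lam_neq0; have [a gamma_a] := gamma_surj (invr_neq0 lam_neq0).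
exists (tau a); split.
- have -> : tau a = tau a * ell_eval 1 by rewrite /ell_eval rmorph1 hornerC mulr1.
  exact: quasipoly_tau.
- by exists (tau (- a)); rewrite -tauD subrr tau0.
- by rewrite sigma_tau gamma_a mulrA -rmorphM mulfV // rmorph1 mul1r.
Qed.

End QuasiPolynomials.

Lemma unitmx_with_first_row (F : fieldType) n (v : 'rV[F]_(1 + n)) :
  v != 0 -> exists2 P : 'M[F]_(1 + n), P \in unitmx & usubmx P = v.
Proof.
move=> v_neq0; pose e0 : 'rV[F]_(1 + n) := row_mx 1%:M 0.
have e0v : e0 *m col_mx v 0 = v by rewrite mul_row_col mul1mx mul0mx addr0.
have [|P P_unit e0P] := complete_unitmx (U := e0) (f := col_mx v 0).
  by rewrite e0v !rank_rV v_neq0 row_mx_eq0 (negbTE (matrix_nonzero1 _ _)).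
exists P => //.
by rewrite -e0v e0P -[P]vsubmxK mul_row_col mul1mx mul0mx addr0 col_mxKu.
Qed.

Lemma unitmx_similar_lower_block (K : closedFieldType) n (M : 'M[K]_(1 + n)) :
  M \in unitmx -> exists P lam (c : 'cV_n) M',
  [/\ P \in unitmx, lam != 0, M' \in unitmx & P *m M = block_mx lam%:M 0 c M' *m P].
Proof.
move=> M_unit.
have [lam /eigenvalueP[v Mv v_neq0]] : exists lam, eigenvalue M lam.
  have [lam root_lam] : exists lam, root (char_poly M) lam.
    by apply/closed_rootP; rewrite size_char_poly.
  by exists lam; rewrite eigenvalue_root_char.
have [P P_unit Pv] := unitmx_with_first_row v_neq0.
pose T := P *m M *m invmx P.
have PM : P *m M = T *m P by rewrite mulmxKV.
have uT : usubmx T = row_mx lam%:M 0.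
  rewrite -!mul_usub_mx Pv Mv -scalemxAl -Pv mul_usub_mx mulmxV //.
  by rewrite (scalar_mx_block 1 n 1) block_mxEv col_mxKu scale_row_mx scalemx1 scaler0.
have Tdef : T = block_mx lam%:M 0 (dlsubmx T) (drsubmx T).
  by rewrite -[LHS]submxK /ulsubmx /ursubmx uT row_mxKl row_mxKr.
have : T \in unitmx by rewrite !unitmx_mul P_unit M_unit unitmx_inv.
rewrite Tdef unitmxE det_lblock det_scalar1 unitrM unitfE -unitmxE => /andP[lam_neq0 M'_unit].
by exists P, lam, (dlsubmx T), (drsubmx T); rewrite -Tdef.
Qed.

Section FixedFrame.
Variables (K : closedFieldType) (E : comNzRingType) (kk : {rmorphism K -> E}).
Variables (sigma : {rmorphism E -> E}) (S : E -> Prop).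
Hypothesis sigma_kk : forall c, sigma (kk c) = kk c.
Hypothesis S0 : S 0.
Hypothesis SD : forall x y, S x -> S y -> S (x + y).
Hypothesis SMk : forall c x, S x -> S (x * kk c).
Hypothesis S_sigma : forall x, S x -> S (sigma x).
Hypothesis S_solve : forall lam r, S r -> exists2 x, S x & x = kk lam * sigma x + r.
Hypothesis S_unit_solution : forall lam, lam != 0 ->
  exists u, [/\ S u, exists v, u * v = 1 & u = kk lam * sigma u].

(* The rows of [B] form a basis of [E^n] fixed by [w |-> sigma(w) M]. *)
Definition fixed_frame n (M : 'M[K]_n) (B : 'M[E]_n) :=
  [/\ forall i j, S (B i j), exists y, \det B * y = 1
    & map_mx sigma B *m map_mx kk M = B].

Lemma S_mulmx m n p (B : 'M[E]_(m, n)) (N : 'M[K]_(n, p)) :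
  (forall i j, S (B i j)) -> forall i j, S ((B *m map_mx kk N) i j).
Proof.
move=> SB i j; rewrite mxE; apply: (big_ind S) => // k _.
by rewrite mxE; exact: SMk.
Qed.

Lemma map_mx_sigma_kk m n (N : 'M[K]_(m, n)) : map_mx sigma (map_mx kk N) = map_mx kk N.
Proof. by apply/matrixP => i j; rewrite !mxE sigma_kk. Qed.

Lemma fixed_frame_similar n (M T P : 'M[K]_n) (C : 'M[E]_n) :
  P \in unitmx -> P *m M = T *m P -> fixed_frame T C ->
  fixed_frame M (C *m map_mx kk P).
Proof.
move=> P_unit PM [SC [y detCy] CT]; split.
- exact: S_mulmx.
- exists (y * kk (\det P)^-1).
  rewrite det_mulmx det_map_mx mulrACA detCy mul1r -rmorphM mulfV ?rmorph1 //.
  by rewrite -unitfE -unitmxE.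
- by rewrite map_mxM map_mx_sigma_kk -mulmxA -map_mxM PM map_mxM mulmxA CT.
Qed.

Lemma fixed_frame_lower_block n lam (c : 'cV[K]_n) (M' : 'M[K]_n) (B' : 'M[E]_n) :
  lam != 0 -> fixed_frame M' B' -> exists C, fixed_frame (block_mx lam%:M 0 c M') C.
Proof.
move=> lam_neq0 [SB' [y' detBy'] B'M'].
have [u [Su [v uv] Du]] := S_unit_solution lam_neq0.
pose r := map_mx sigma B' *m map_mx kk c.
have Sr i : S (r i 0) by apply: S_mulmx => k l; rewrite mxE; exact: S_sigma.
have [f Df] : exists f : 'I_n -> E, forall i, S (f i) /\ f i = kk lam * sigma (f i) + r i 0.
  apply: (@fin_all_exists _ (fun=> E)
    (fun i x => S x /\ x = kk lam * sigma x + r i 0)) => i.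
  by have [x] := S_solve lam (Sr i); exists x.
exists (block_mx u%:M 0 (\col_i f i) B'); split.
- move=> i j; case: (split_ordP i) => {}i ->; case: (split_ordP j) => {}j ->.
  + by rewrite block_mxEul mxE !ord1 mulr1n.
  + by rewrite block_mxEur mxE.
  + by rewrite block_mxEdl mxE; exact: (Df i).1.
  + by rewrite block_mxEdr.
- by exists (v * y'); rewrite det_lblock det_scalar1 mulrACA uv detBy' mulr1.
- rewrite !map_block_mx mulmx_block !map_mx0 !map_scalar_mx !mulmx0 !mul0mx.
  rewrite !addr0 !add0r B'M' -scalar_mxM /= mulrC -Du; congr block_mx.
  apply/matrixP => i j; rewrite ord1 mul_mx_scalar !mxE.
  by rewrite [RHS](Df i).2 mulrC [in RHS]mxE.
Qed.

Lemma exists_fixed_frame n (M : 'M[K]_n) : M \in unitmx -> exists B, fixed_frame M B.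
Proof.
elim: n M => [|n IH] M M_unit.
  exists 1%:M; split; first by case.
  - by exists 1; rewrite det1 mulr1.
  - by apply/matrixP; case.
have [P [lam [c [M' [P_unit lam_neq0 M'_unit PM]]]]] := unitmx_similar_lower_block M_unit.
have [B' frameB'] := IH M' M'_unit.
have [C frameC] := fixed_frame_lower_block c lam_neq0 frameB'.
by exists (C *m map_mx kk P); exact: fixed_frame_similar frameC.
Qed.

End FixedFrame.

Lemma unique_row_coords (R : comNzRingType) n (B : 'M[R]_n) y :
  \det B * y = 1 -> forall w : 'rV[R]_n, exists! c, w = c *m B.
Proof.
move=> detBy w; pose B' := y *: \adj B.
have BB' : B *m B' = 1%:M by rewrite -scalemxAr mul_mx_adj scale_scalar_mx mulrC detBy.
have B'B : B' *m B = 1%:M by rewrite -scalemxAl mul_adj_mx scale_scalar_mx mulrC detBy.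
exists (w *m B'); split; first by rewrite -mulmxA B'B mulmx1.
by move=> c ->; rewrite -mulmxA BB' mulmx1.
Qed.

Theorem mainTheorem7
  (* K algebraically closed of characteristic 0 *)
  (K : closedFieldType) (charK : [pchar K] =i pred0)
  (* A commutative ring containing K[t,t^{-1}] as a subring *)
  (A : comAlgType K) (t : A)
  (t_unit : exists u : A, t * u = 1)
  (t_transc : forall p : {poly K}, p != 0 -> (map_poly (in_alg A) p).[t] != 0)
  (* derivation extending t d/dt *)
  (der : A -> A)
  (der_add : forall x y, der (x + y) = der x + der y)
  (der_mul : forall x y, der (x * y) = x * der y + der x * y)
  (der_K : forall c : K, der (c%:A) = 0)
  (der_t : der t = t)
  (* gamma = gammabar o pi, gammabar : K/Z -> K^x a group isomorphism *)
  (gamma : K -> K)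
  (gamma_add : forall a b, gamma (a + b) = gamma a * gamma b)
  (gamma_neq0 : forall a, gamma a != 0)
  (gamma_ker : forall a, gamma a = 1 <-> exists z : int, a = z%:~R)
  (gamma_surj : forall y, y != 0 -> exists a, gamma a = y)
  (* E_A = A[t^K][ell] *)
  (E : comNzRingType) (iota : {rmorphism A -> E}) (tau : K -> E) (ell : E)
  (HE : is_EA t iota tau ell)
  (* sigma *)
  (sigma : {rmorphism E -> E}) (sigma_bij : bijective sigma)
  (sigma_A : forall x, sigma (iota x) = iota x)
  (sigma_t : forall a, sigma (tau a) = iota ((gamma a)%:A) * tau a)
  (sigma_ell : sigma ell = ell + 1)
  (* V = K^n with the automorphism [1] : v |-> v *m M *)
  (n : nat) (M : 'M[K]_n) (M_inv : M \in unitmx) :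
  exists B : 'M[E]_n,
    (forall i : 'I_n, shift_act iota sigma M (row i B) = row i B) /\
    (forall w : 'rV[E]_n, exists! c : 'rV[E]_n, w = c *m B).
Proof.
have [[tau0 tauD _] _] := HE.
pose kk : {rmorphism K -> E} := iota \o in_alg A.
have sigma_kk c : sigma (kk c) = kk c by exact: sigma_A.
have sigma_tau a : sigma (tau a) = kk (gamma a) * tau a by exact: sigma_t.
have [B [_ [y detBy] BM]] : exists B, fixed_frame kk sigma (quasipoly kk tau ell) M B.
  apply: exists_fixed_frame M_inv => //.
  - exact: quasipoly0.
  - exact: quasipolyD.
  - exact: quasipolyMk.
  - exact: quasipoly_sigma.
  - exact: quasipoly_solve.
  - exact: quasipoly_unit_solution.
exists B; split; last exact: unique_row_coords detBy.
by move=> i; rewrite /shift_act map_row -row_mul BM.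
Qed.
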